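(* Let $H=(V,E)$ be an undirected graph, $s,t\in V$, and $\ell$ a positive integer. Then $\lambda_{H\setminus C}(s,t)\ge 2(\ell-|C|)$ holds for every $C\subseteq V\setminus\{s,t\}$ with $|C|<\ell$ if and only if $H$ contains $2\ell$ pairwise edge-disjoint $st$-paths such that every node $v\in V\setminus\{s,t\}$ belongs to at most $2$ of them.
   Context: $\lambda_{F}(s,t)$ denotes the maximum number of pairwise edge-disjoint $st$-paths in a graph $F$; $H\setminus C$ is the graph obtained from $H$ by deleting the nodes of $C$ (and their incident edges). *)

(* Finite undirected multigraphs: node type V, edge type E,
   and an endpoint map ends : E -> V * V (edge e joins (ends e).1, (ends e).2;
   the orientation of the pair is irrelevant). *)
From mathcomp Require Import all_boot.
Unset Strict Implicit. Unset Printing Implicit Defensive.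

Section Graphs.
Variables (V E : finType) (ends : E -> V * V).

Definition joins (e : E) (x y : V) : bool :=
  (ends e == (x, y)) || (ends e == (y, x)).

Definition is_st_path (s t : V) (vs : seq V) (es : seq E) : Prop :=
  [/\ size vs = (size es).+1, uniq vs, head t vs = s, last s vs = t &
      all (fun p => joins p.1 p.2.1 p.2.2) (zip es (zip vs (behead vs)))].

(* P is a family of k pairwise edge-disjoint s-t paths of the graph H \ C
   (i.e. s-t paths of H none of whose nodes lies in C). *)
Definition edp_family (s t : V) (C : {set V}) (k : nat)
    (P : 'I_k -> seq V * seq E) : Prop :=
  (forall i, is_st_path s t (P i).1 (P i).2 /\ all (fun v => v \notin C) (P i).1) /\
  (forall i j : 'I_k, i != j -> forall e, e \in (P i).2 -> e \notin (P j).2).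

(* lambda_{H \ C}(s,t) >= k : there are k pairwise edge-disjoint s-t paths in H \ C
   (lambda is the maximum such number). *)
Definition lambda_ge (C : {set V}) (s t : V) (k : nat) : Prop :=
  exists P : 'I_k -> seq V * seq E, edp_family s t C k P.

End Graphs.

Arguments joins {V E} ends e x y.
Arguments is_st_path {V E} ends s t vs es.
Arguments edp_family {V E} ends s t C k P.
Arguments lambda_ge {V E} ends C s t k.

From mathcomp Require Import all_boot zify.
Set Implicit Arguments. Unset Strict Implicit. Unset Printing Implicit Defensive.

(* The easy direction counts: deleting C destroys at most 2 |C| of the paths.
   The hard direction is a max-flow argument in an auxiliary digraph (the
   "gadget") in which every inner node has capacity 2 and every edge
   capacity 1, realised by unit-capacity arcs. *)

Section Walks.
Variables (N S : finType) (tl hd : S -> N).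

Definition walk (x y : N) (ws : seq S) : Prop :=
  [/\ map tl ws = belast x (map hd ws), last x (map hd ws) = y
    & uniq (x :: map hd ws)].

Lemma walk_inv (Q : N -> Prop) x y ws : walk x y ws -> Q x ->
  (forall z, z \in ws -> Q (tl z) -> Q (hd z)) -> Q y.
Proof.
case=> + <- _; elim: ws x => [|z ws IH] x //= [Htl Hrest] Qx Hstep.
apply: IH Hrest _ _; first by apply: Hstep; rewrite ?inE ?eqxx // Htl.
by move=> w wws; apply: Hstep; rewrite inE wws orbT.
Qed.

Definition step (ok : pred S) : rel N :=
  fun u w => [exists z, [&& ok z, tl z == u & hd z == w]].

Lemma walk_of_connect (ok : pred S) x y : connect (step ok) x y ->
  exists2 ws, walk x y ws & all ok ws.
Proof.
move/connectP=> [p Hp ->]; case/shortenP: Hp => q Hq Uq _.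
suff [ws [Hhd Htl Hok]] :
    exists ws, [/\ map hd ws = q, map tl ws = belast x q & all ok ws].
  by exists ws; first split; rewrite ?Hhd.
elim: q x Hq {Uq} => [|w q IH] x /=; first by exists [::].
case/andP=> /existsP[z /and3P[okz /eqP tz /eqP hz]] /IH[ws [H1 H2 H3]].
by exists (z :: ws); rewrite /= H1 H2 tz hz okz H3.
Qed.

Lemma walk_uniq x y ws : walk x y ws -> uniq ws.
Proof. by case=> _ _ /= /andP[_ /map_uniq]. Qed.

Lemma walk_count_hd x y ws v : walk x y ws ->
  count (fun z => hd z == v) ws = (v \in map hd ws).
Proof.
case=> _ _ /= /andP[_ U].
by rewrite -[LHS](count_map hd (pred1 v)) count_uniq_mem.
Qed.

Lemma walk_count_tl x y ws v : walk x y ws -> v != y ->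
  count (fun z => tl z == v) ws = (v \in x :: map hd ws).
Proof.
case=> Htl Hlast U vy.
have Ub : uniq (belast x (map hd ws)) by move: U; rewrite lastI rcons_uniq => /andP[].
have -> : count (fun z => tl z == v) ws = count (pred1 v) (map tl ws).
  by rewrite count_map.
by rewrite Htl count_uniq_mem // lastI mem_rcons inE Hlast (negbTE vy).
Qed.

End Walks.

Lemma connect_invariant (T : finType) (r : rel T) (R : pred T) x y :
  (forall u w, R u -> r u w -> R w) -> R x -> connect r x y -> R y.
Proof.
move=> Hcl Rx /connectP[p Hp ->]; elim: p x Rx Hp => //= w p IH x Rx /andP[rxw Hp].
exact: IH (Hcl _ _ Rx rxw) Hp.
Qed.

Lemma count_uniq_sum (T : finType) (P : pred T) (ws : seq T) : uniq ws ->
  count P ws = \sum_(z | P z) (z \in ws).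
Proof.
move=> U; rewrite -sum1_count big_mkcond big_uniq // [RHS]big_mkcond [LHS]big_mkcond.
by apply: eq_bigr => z _; case: (P z); case: (z \in ws).
Qed.

Lemma card_indicator (T : finType) (X : {set T}) : #|X| = \sum_x (x \in X).
Proof. by rewrite -sum1_card big_mkcond; apply: eq_bigr => x _; case: (x \in X). Qed.

Section Flows.
Variables (N A : finType) (src dst : A -> N) (s t : N).
Hypothesis st : s != t.

Definition deg (F : {set A}) (f : A -> N) (v : N) : nat :=
  \sum_(a | f a == v) (a \in F).

Lemma deg_set0 f v : deg set0 f v = 0.
Proof. by rewrite /deg big1 // => a _; rewrite inE. Qed.

(* F is an integral unit-capacity s-t flow of value k: flow is conserved at
   every node other than s and t, and s emits k more arcs than it receives. *)
Definition flow (F : {set A}) (k : nat) : Prop :=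
  (forall v, v != s -> v != t -> deg F dst v = deg F src v) /\
  deg F src s = deg F dst s + k.

Definition leaving (R : {set N}) : {set A} :=
  [set a | (src a \in R) && (dst a \notin R)].
Definition entering (R : {set N}) : {set A} :=
  [set a | (src a \notin R) && (dst a \in R)].

Lemma flow_cut F k (R : {set N}) : flow F k -> s \in R -> t \notin R ->
  #|F :&: leaving R| = #|F :&: entering R| + k.
Proof.
case=> Hcons Hs sR tR.
have deg_in (f : A -> N) : \sum_(a | f a \in R) (a \in F) = \sum_(v in R) deg F f v.
  rewrite (partition_big f (mem R)) //=; apply: eq_bigr => v vR.
  by apply: eq_bigl => a; case: eqP => [->|]; rewrite ?vR ?andbF.
have Hcut : \sum_(a | src a \in R) (a \in F) = \sum_(a | dst a \in R) (a \in F) + k.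
  rewrite !deg_in (bigD1 s) //= [X in _ = X + _](bigD1 s) //= Hs addnAC.
  congr (_ + _ + _); apply: eq_bigr => v /andP[vR vs].
  by rewrite Hcons //; apply: contraNneq tR => <-.
pose inner := [set a | (src a \in R) && (dst a \in R)].
have Hsrc : \sum_(a | src a \in R) (a \in F) = #|F :&: inner| + #|F :&: leaving R|.
  rewrite (card_indicator (F :&: inner)) (card_indicator (F :&: leaving R)).
  rewrite big_mkcond -big_split; apply: eq_bigr => a _.
  by rewrite !inE; case: (a \in F); case: (src a \in R); case: (dst a \in R).
have Hdst : \sum_(a | dst a \in R) (a \in F) = #|F :&: inner| + #|F :&: entering R|.
  rewrite (card_indicator (F :&: inner)) (card_indicator (F :&: entering R)).
  rewrite big_mkcond -big_split; apply: eq_bigr => a _.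
  by rewrite !inE; case: (a \in F); case: (src a \in R); case: (dst a \in R).
by move: Hcut; rewrite Hsrc Hdst -addnA => /addnI.
Qed.

Lemma deg_exchange (F G H K : {set A}) f v :
  (forall a, (a \in F) + (a \in G) = (a \in H) + (a \in K)) ->
  deg F f v + deg G f v = deg H f v + deg K f v.
Proof. by move=> E; rewrite /deg -!big_split /=; apply: eq_bigr => a _; rewrite E. Qed.

Lemma deg_seq (ws : seq A) f v : uniq ws ->
  deg [set a | a \in ws] f v = count (fun a => f a == v) ws.
Proof. by move=> U; rewrite (count_uniq_sum _ U); apply: eq_bigr => a _; rewrite inE. Qed.

(* Residual graph of F: an arc a not in F may be used forwards (a, true);
   an arc of F may be used backwards (a, false). *)
Definition res_tail (z : A * bool) : N := if z.2 then src z.1 else dst z.1.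
Definition res_head (z : A * bool) : N := if z.2 then dst z.1 else src z.1.
Definition residual (F : {set A}) (z : A * bool) : bool :=
  if z.2 then z.1 \notin F else z.1 \in F.

Lemma count_residual (f g : A -> N) (ws : seq (A * bool)) v : uniq ws ->
  count (fun z => (if z.2 then f z.1 else g z.1) == v) ws =
  deg [set a | (a, true) \in ws] f v + deg [set a | (a, false) \in ws] g v.
Proof.
pose G a b := if (if b then f a else g a) == v then nat_of_bool ((a, b) \in ws) else 0.
move=> U; rewrite (count_uniq_sum _ U) big_mkcond (eq_bigr (fun z => G z.1 z.2)) //=.
  rewrite -(pair_big xpredT xpredT G) /deg (big_mkcond (fun a => f a == v)).
  rewrite (big_mkcond (fun a => g a == v)) -big_split /=.
  by apply: eq_bigr => a _; rewrite big_bool /G !inE.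
by case.
Qed.

Lemma augment F k ws : flow F k -> walk res_tail res_head s t ws ->
  all (residual F) ws ->
  flow ((F :\: [set a | (a, false) \in ws]) :|: [set a | (a, true) \in ws]) k.+1.
Proof.
move=> [Hcons Hs] W /allP Hres.
set back := [set a | (a, false) \in ws]; set fwd := [set a | (a, true) \in ws].
have Hex f v : deg ((F :\: back) :|: fwd) f v + deg back f v = deg F f v + deg fwd f v.
  apply: deg_exchange => a; rewrite !inE.
  case Hf: ((a, true) \in ws); case Hb: ((a, false) \in ws) => /=.
  - by have := Hres _ Hf; have := Hres _ Hb; rewrite /residual /= => ->.
  - by have := Hres _ Hf; rewrite /residual /= => /negbTE ->.
  - by have := Hres _ Hb; rewrite /residual /= => ->.
  - by rewrite orbF addn0.
have U := walk_uniq W.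
have Hin v : deg fwd dst v + deg back src v = (v \in map res_head ws).
  by rewrite -(walk_count_hd v W) (count_residual _ _ _ U).
have Hout v : v != t -> deg fwd src v + deg back dst v = (v \in s :: map res_head ws).
  by move=> vt; rewrite -(walk_count_tl W vt) (count_residual _ _ _ U).
have s_notin : s \notin map res_head ws by case: W => _ _ /= /andP[].
split.
- move=> v vs vt; have := Hin v; have := Hout v vt; rewrite inE (negbTE vs) /=.
  by have := Hex dst v; have := Hex src v; have := Hcons v vs vt; lia.
- have := Hin s; have := Hout s st; rewrite inE eqxx (negbTE s_notin) /=.
  by have := Hex dst s; have := Hex src s; lia.
Qed.

Notation res_step F := (step res_tail res_head (residual F)).

(* If the nodes reachable from s in the residual graph do not contain t, they
   form a cut all of whose leaving arcs carry flow and no entering arc does. *)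
Lemma residual_cut F k (R : {set N}) : flow F k -> s \in R -> t \notin R ->
  (forall z, residual F z -> res_tail z \in R -> res_head z \in R) ->
  #|leaving R| = k.
Proof.
move=> HF sR tR Hcl; have := flow_cut HF sR tR.
have -> : F :&: leaving R = leaving R.
  apply/setIidPr/subsetP => a; rewrite !inE => /andP[aR aR'].
  by apply: contraNT aR' => aF; exact: (Hcl (a, true)).
suff -> : F :&: entering R = set0 by rewrite cards0.
apply/setP => a; rewrite !inE; apply/andP => -[aF /andP[aR' aR]].
by move: aR'; rewrite (Hcl (a, false)).
Qed.

Theorem max_flow K :
  (forall X : {set A}, #|X| < K -> connect (step src dst (fun a => a \notin X)) s t) ->
  exists F, flow F K.
Proof.
move=> Hsep; suff H k : k <= K -> exists F, flow F k by exact: H.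
elim: k => [|k IH] Hk.
  by exists set0; split=> *; rewrite !deg_set0.
have [F HF] := IH (ltnW Hk).
case: (boolP (connect (res_step F) s t)) => [/walk_of_connect[ws W Hres]|Hnot].
  by eexists; exact: augment HF W Hres.
pose R := [set v | connect (res_step F) s v].
have sR : s \in R by rewrite inE connect0.
have tR : t \notin R by rewrite inE.
have Hcl z : residual F z -> res_tail z \in R -> res_head z \in R.
  rewrite !inE => Hz Hs; apply: connect_trans Hs (connect1 _).
  by apply/existsP; exists z; rewrite Hz !eqxx.
have Hcut := residual_cut HF sR tR Hcl.
have Hinv u w : u \in R -> step src dst (fun a => a \notin leaving R) u w -> w \in R.
  move=> uR /existsP[a /and3P[aX /eqP su /eqP <-]]; rewrite -su in uR.
  by move: aX; rewrite inE uR negbK.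
have small : #|leaving R| < K by rewrite Hcut.
by move: tR; rewrite (connect_invariant Hinv sR (Hsep _ small)).
Qed.

Lemma flow_walk F k : flow F k.+1 -> exists2 ws, walk src dst s t ws & {subset ws <= F}.
Proof.
move=> HF; suff /walk_of_connect[ws W /allP inF] : connect (step src dst (mem F)) s t.
  by exists ws.
apply: contraT => Hnot.
pose R := [set v | connect (step src dst (mem F)) s v].
have sR : s \in R by rewrite inE connect0.
have tR : t \notin R by rewrite inE.
have := flow_cut HF sR tR.
suff -> : F :&: leaving R = set0 by rewrite cards0 addnS.
apply/setP => a; rewrite !inE; apply/and3P => -[aF aR /negP[]].
apply: connect_trans aR (connect1 _).
by apply/existsP; exists a; rewrite !eqxx !andbT.
Qed.

Lemma remove_walk F k ws : flow F k.+1 -> walk src dst s t ws -> {subset ws <= F} ->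
  flow (F :\: [set a | a \in ws]) k.
Proof.
move=> [Hcons Hs] W inF.
set P := [set a | a \in ws].
have Hex f v : deg (F :\: P) f v + deg P f v = deg F f v + deg set0 f v.
  apply: deg_exchange => a; rewrite !inE.
  by case Ha: (a \in ws) => //=; rewrite (inF _ Ha).
have U := walk_uniq W.
have Hin v : deg P dst v = (v \in map dst ws) by rewrite deg_seq // (walk_count_hd v W).
have Hout v : v != t -> deg P src v = (v \in s :: map dst ws).
  by move=> vt; rewrite deg_seq // (walk_count_tl W vt).
have s_notin : s \notin map dst ws by case: W => _ _ /= /andP[].
split.
- move=> v vs vt; have := Hin v; have := Hout v vt; rewrite inE (negbTE vs) /=.
  by have := Hex dst v; have := Hex src v; have := Hcons v vs vt; rewrite !deg_set0; lia.
- have := Hin s; have := Hout s st; rewrite inE eqxx (negbTE s_notin) /=.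
  by have := Hex dst s; have := Hex src s; rewrite !deg_set0; lia.
Qed.

Theorem flow_decomposition k F : flow F k ->
  exists Ws : seq (seq A), [/\ size Ws = k,
    forall W, W \in Ws -> walk src dst s t W /\ {subset W <= F} &
    forall a, count (fun W => a \in W) Ws <= 1].
Proof.
elim: k F => [|k IH] F HF; first by exists [::].
have [ws W inF] := flow_walk HF.
have [Ws [Hsize HWs Hdisj]] := IH _ (remove_walk HF W inF).
exists (ws :: Ws); split => /=; first by rewrite Hsize.
- move=> W'; rewrite inE => /orP[/eqP -> //|W'Ws].
  have [HW' inF'] := HWs W' W'Ws; split => // a aW'.
  by have := inF' a aW'; rewrite !inE => /andP[].
- move=> a; case aws: (a \in ws) => /=; last exact: Hdisj.
  suff : ~~ has (fun W => a \in W) Ws by rewrite has_count -leqNgt leqn0 => /eqP ->.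
  apply/hasPn => W' W'Ws; apply/negP => aW'.
  by have := (HWs W' W'Ws).2 a aW'; rewrite !inE aws.
Qed.

End Flows.

Section UndirectedPaths.
Variables (V E : finType) (ends : E -> V * V) (s t : V).

Definition traversal_tail (z : E * bool) : V :=
  if z.2 then (ends z.1).1 else (ends z.1).2.
Definition traversal_head (z : E * bool) : V :=
  if z.2 then (ends z.1).2 else (ends z.1).1.

Lemma joins_traversal z : joins ends z.1 (traversal_tail z) (traversal_head z).
Proof.
by case: z => e [];
  rewrite /joins /traversal_tail /traversal_head /= -surjective_pairing eqxx ?orbT.
Qed.

Lemma st_path_of_walk ws : walk traversal_tail traversal_head s t ws ->
  is_st_path ends s t (s :: map traversal_head ws) (map fst ws).
Proof.
case=> Htl Hlast U; split => //=; first by rewrite !size_map.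
elim: ws s Htl {Hlast U} => [|z ws IH] x //= [<- Htl].
by rewrite joins_traversal IH.
Qed.

Lemma st_path_invariant (Q : V -> Prop) vs es : is_st_path ends s t vs es -> Q s ->
  (forall e x y, e \in es -> x \in vs -> y \in vs -> x != t -> joins ends e x y ->
     Q x -> Q y) ->
  Q t.
Proof.
case; case: vs => [//|x p] /= Hsize U Hx; rewrite {}Hx in U * => Hlast Hz Qs Hstep.
elim: p es s Hsize U Hlast Hz Qs Hstep => [|y p IH] [|e es] x0 //=.
  by move=> _ _ <-.
move=> [Hsize] /andP[xp U] Hlast /andP[Jxy Hz] Qx Hstep.
have xt : x0 != t by apply: contraNneq xp => ->; rewrite -Hlast mem_last.
apply: (IH es y) => //.
- by rewrite Hsize.
- by apply: (Hstep e x0 y) => //; rewrite !inE eqxx ?orbT.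
- by move=> f u w fes up wp; apply: Hstep; rewrite inE ?fes ?up ?wp orbT.
Qed.

End UndirectedPaths.

Section Gadget.
Variables (V E : finType) (ends : E -> V * V) (s t : V).

(* The auxiliary digraph in which unit arc capacities model node capacity 2
   and edge capacity 1.  A node v splits into v_in = inl (v, false) and
   v_out = inl (v, true), joined by the two parallel arcs inl (v, false) and
   inl (v, true).  An edge e = {u, w} becomes e_in = inr (e, false) and
   e_out = inr (e, true) with the arcs inr (e, j):
   j = 0 : u_out -> e_in,  1 : w_out -> e_in,  2 : e_in -> e_out,
   j = 3 : e_out -> u_in,  4 : e_out -> w_in. *)
Definition gnode : finType := ((V * bool) + (E * bool))%type.
Definition garc : finType := ((V * bool) + (E * 'I_5))%type.

Definition gtail (a : garc) : gnode :=
  match a with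
  | inl (v, _) => inl (v, false)
  | inr (e, j) =>
      match val j with
      | 0 => inl ((ends e).1, true) | 1 => inl ((ends e).2, true)
      | 2 => inr (e, false) | _ => inr (e, true)
      end
  end.

Definition ghead (a : garc) : gnode :=
  match a with
  | inl (v, _) => inl (v, true)
  | inr (e, j) =>
      match val j with
      | 0 | 1 => inr (e, false) | 2 => inr (e, true)
      | 3 => inl ((ends e).1, false) | _ => inl ((ends e).2, false)
      end
  end.

Definition gsource : gnode := inl (s, true).
Definition gsink : gnode := inl (t, false).

Definition middle_arc (e : E) : garc := inr (e, Ordinal (isT : 2 < 5)).

Section WalkProjection.
Variable W : seq garc.

Definition used_edges : {set E} := [set e | middle_arc e \in W].
Definition used_nodes : {set V} :=
  [set v | [|| v == s, v == t, inl (v, false) \in W | inl (v, true) \in W]].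

Definition used_traversal (z : E * bool) : bool :=
  (z.1 \in used_edges) && (traversal_head ends z \in used_nodes).
Notation reach :=
  (connect (step (traversal_tail ends) (traversal_head ends) used_traversal) s).

Lemma reach_joins x e y : reach x -> e \in used_edges -> y \in used_nodes ->
  joins ends e x y -> reach y.
Proof.
move=> Hx eW yW Hj; apply: connect_trans Hx (connect1 _); apply/existsP.
case/orP: Hj => /eqP He; [exists (e, true) | exists (e, false)];
  by rewrite /used_traversal /traversal_tail /traversal_head /= He eW yW !eqxx.
Qed.

(* Invariant along W: every gadget node it visits is attached to an H-node
   reachable from s (for v_in, possibly through a used edge not yet crossed;
   for e_out, e is moreover used). *)
Definition attached (x : gnode) : Prop :=
  match x with
  | inl (v, true) => reach v
  | inl (v, false) =>
      reach v \/ exists x e, [/\ reach x, e \in used_edges & joins ends e x v]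
  | inr (e, false) => reach (ends e).1 \/ reach (ends e).2
  | inr (e, true) => (reach (ends e).1 \/ reach (ends e).2) /\ e \in used_edges
  end.

Lemma attached_step a : a \in W -> attached (gtail a) -> attached (ghead a).
Proof.
have joins_rev e : joins ends e (ends e).2 (ends e).1.
  by rewrite /joins -surjective_pairing eqxx orbT.
have joins_fwd e : joins ends e (ends e).1 (ends e).2.
  by rewrite /joins -surjective_pairing eqxx.
case: a => [[v c]|[e [[|[|[|[|[|j]]]]] Hj]]] aW //=.
- case=> [//|[x [e [Hx He Hj]]]]; apply: reach_joins Hx He _ Hj.
  by rewrite inE; case: c aW => ->; rewrite !orbT.
- by left.
- by right.
- move=> H; split=> //; rewrite inE /middle_arc.
  by rewrite (bool_irrelevance Hj isT) in aW.
- case=> [[H|H] He]; first by left.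
  by right; exists (ends e).2, e; split => //; exact: joins_rev.
- case=> [[H|H] He]; last by left.
  by right; exists (ends e).1, e; split => //; exact: joins_fwd.
Qed.

Lemma extract_path : walk gtail ghead gsource gsink W ->
  exists vs es, [/\ is_st_path ends s t vs es, {subset es <= used_edges}
                  & {subset vs <= used_nodes}].
Proof.
move=> HW; have tW : t \in used_nodes by rewrite inE eqxx orbT.
have Ht : reach t.
  have : attached gsink.
    by apply: (walk_inv HW); [exact: connect0 | exact: attached_step].
  by case=> [//|[x [e [Hx He Hj]]]]; apply: reach_joins Hx He tW Hj.
have [ws Hws /allP Hok] := walk_of_connect Ht.
exists (s :: map (traversal_head ends) ws), (map fst ws); split.
- exact: st_path_of_walk.
- by move=> f /mapP[z zw ->]; case/andP: (Hok z zw).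
- move=> v; rewrite inE => /orP[/eqP ->|/mapP[z zw ->]]; first by rewrite inE eqxx.
  by case/andP: (Hok z zw).
Qed.

End WalkProjection.
End Gadget.

Lemma disjoint_hitting_card (I T : finType) (F : {set T}) (S : I -> pred T) :
  (forall i, exists2 x, x \in F & S i x) ->
  (forall i j x, S i x -> S j x -> i = j) -> #|I| <= #|F|.
Proof.
move=> /fin_all_exists2[g gF gS] Hdisj.
have ginj : injective g by move=> i j gij; apply: (Hdisj i j (g i)); rewrite // gij.
rewrite -cardsT -(card_imset _ ginj).
by apply/subset_leq_card/subsetP => _ /imsetP[i _ ->].
Qed.

Lemma edp_avoiding (V E : finType) (ends : E -> V * V) s t (C : {set V}) k
    (P : 'I_k -> seq V * seq E) (F : {set E}) :
  edp_family ends s t C k P -> #|F| < k ->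
  exists i, all (fun e => e \notin F) (P i).2.
Proof.
move=> [_ Hdisj] Fk; apply/existsP; apply: contraTT Fk => /existsPn Hhit.
rewrite -leqNgt -[n in n <= _]card_ord.
apply: (disjoint_hitting_card (S := fun i e => e \in (P i).2)) => [i|i j e ei ej].
  by have := Hhit i; rewrite -has_predC => /hasP[e ei /negPn eF]; exists e.
by apply/eqP/negPn/negP => /(Hdisj i j)/(_ e ei); rewrite ej.
Qed.

Section CutLifting.
Variables (V E : finType) (ends : E -> V * V) (s t : V).
Variable X : {set garc V E}.

Definition cut_nodes : {set V} :=
  [set v | [&& v != s, v != t, inl (v, false) \in X & inl (v, true) \in X]].
Definition cut_edges : {set E} := [set e | [exists j, inr (e, j) \in X]].

Lemma cut_size : 2 * #|cut_nodes| + #|cut_edges| <= #|X|.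
Proof.
pose B := [set a : garc V E | if a is inl _ then true else false].
have HC : 2 * #|cut_nodes| <= #|X :&: B|.
  have inl_inj : injective (fun vc : V * bool => inl vc : garc V E) by move=> ? ? [].
  rewrite -[2](card_bool) -cardsT mulnC -cardsX -(card_imset _ inl_inj).
  apply/subset_leq_card/subsetP => _ /imsetP[[v c] /setXP[vC _] ->].
  by rewrite !inE andbT; move: vC; rewrite inE => /and4P[_ _ vX0 vX1]; case: c.
have HF : #|cut_edges| <= #|X :\: B|.
  pose h e : garc V E := inr (e, odflt ord0 [pick j | inr (e, j) \in X]).
  have h_inj : injective h by move=> e1 e2 [].
  rewrite -(card_imset _ h_inj); apply/subset_leq_card/subsetP => _ /imsetP[e eF ->].
  rewrite !inE /= /h; case: pickP => [j -> //|Hnone].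
  by move: eF; rewrite inE => /existsP[j]; rewrite Hnone.
by have := cardsID B X; lia.
Qed.

Lemma cut_nodes_s : s \notin cut_nodes. Proof. by rewrite inE eqxx. Qed.
Lemma cut_nodes_t : t \notin cut_nodes. Proof. by rewrite inE eqxx andbF. Qed.

Hypothesis st : s != t.

Notation gconnect :=
  (connect (step (gtail ends) (ghead ends) (fun a => a \notin X)) (gsource E s)).

Lemma gconnect_arc a : a \notin X -> gconnect (gtail ends a) -> gconnect (ghead ends a).
Proof.
move=> aX H; apply: connect_trans H (connect1 _).
by apply/existsP; exists a; rewrite aX !eqxx.
Qed.

Lemma gconnect_node v : v \notin cut_nodes -> v != s -> v != t ->
  gconnect (inl (v, false)) -> gconnect (inl (v, true)).
Proof.
rewrite inE => vC vs vt; move: vC; rewrite vs vt /= negb_and.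
by case/orP => aX; [apply: (gconnect_arc (a := inl (v, false)))
                  | apply: (gconnect_arc (a := inl (v, true)))].
Qed.

Lemma gconnect_edge e x y : e \notin cut_edges -> joins ends e x y ->
  gconnect (inl (x, true)) -> gconnect (inl (y, false)).
Proof.
rewrite inE => /existsPn eX /orP[] /eqP He Hx.
- have -> : y = (ends e).2 by rewrite He.
  apply: (gconnect_arc (a := inr (e, Ordinal (isT : 4 < 5)))) (eX _) _.
  apply: (gconnect_arc (a := inr (e, Ordinal (isT : 2 < 5)))) (eX _) _.
  apply: (gconnect_arc (a := inr (e, Ordinal (isT : 0 < 5)))) (eX _) _.
  by rewrite /= He.
- have -> : y = (ends e).1 by rewrite He.
  apply: (gconnect_arc (a := inr (e, Ordinal (isT : 3 < 5)))) (eX _) _.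
  apply: (gconnect_arc (a := inr (e, Ordinal (isT : 2 < 5)))) (eX _) _.
  apply: (gconnect_arc (a := inr (e, Ordinal (isT : 1 < 5)))) (eX _) _.
  by rewrite /= He.
Qed.

Lemma lift_path vs es : is_st_path ends s t vs es ->
  {in vs, forall v, v \notin cut_nodes} -> {in es, forall e, e \notin cut_edges} ->
  gconnect (gsink E t).
Proof.
move=> Hp vsC esF.
pose Q y := y = s \/ gconnect (inl (y, false)).
suff [ts|//] : Q t by move: st; rewrite ts eqxx.
apply: (st_path_invariant Hp); first by left.
move=> e x y ees xvs yvs xt Hj Qx; right; apply: gconnect_edge (esF _ ees) Hj _.
have [->|xs] := eqVneq x s; first exact: connect0.
case: Qx => [xs0|Hx]; first by rewrite xs0 eqxx in xs.
exact: gconnect_node (vsC _ xvs) xs xt Hx.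
Qed.

End CutLifting.

Lemma gadget_connected (V E : finType) (ends : E -> V * V) (s t : V) (l : nat) :
  s != t ->
  (forall C : {set V}, s \notin C -> t \notin C -> #|C| < l ->
     lambda_ge ends C s t (2 * (l - #|C|))) ->
  forall X : {set garc V E}, #|X| < 2 * l ->
    connect (step (gtail ends) (ghead ends) (fun a => a \notin X))
      (gsource E s) (gsink E t).
Proof.
move=> st Hcut X HX; have Hsize := cut_size s t X.
have Hsmall : #|cut_nodes s t X| < l by lia.
have [P HP] := Hcut _ (cut_nodes_s s t X) (cut_nodes_t s t X) Hsmall.
have [i /allP Hi] : exists i, all (fun e => e \notin cut_edges X) (P i).2.
  by apply: edp_avoiding HP _; lia.
have [Hpath /allP HC] := HP.1 i.
by apply: (lift_path st (X := X) Hpath) => [v /HC | e /Hi].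
Qed.

Lemma nth_count_le1 (T : eqType) (p : pred T) (x0 : T) (ss : seq T) i j :
  count p ss <= 1 -> i < size ss -> j < size ss ->
  p (nth x0 ss i) -> p (nth x0 ss j) -> i = j.
Proof.
have has_nth k ss' : k < size ss' -> p (nth x0 ss' k) -> 0 < count p ss'.
  move=> ks pk; rewrite -has_count; apply/hasP.
  by exists (nth x0 ss' k); rewrite ?mem_nth.
elim: ss i j => [|x ss IH] [|i] [|j] //= Hc Hi Hj Pi Pj.
- by move: Hc; have := has_nth _ _ Hj Pj; rewrite Pi; lia.
- by move: Hc; have := has_nth _ _ Hi Pi; rewrite Pj; lia.
- by rewrite (IH i j) //; move: Hc; case: (p x) => /=; lia.
Qed.

Section Paths.
Variables (V E : finType) (ends : E -> V * V) (s t : V).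
Hypothesis st : s != t.

(* The cut condition yields 2l edge-disjoint s-t paths through every inner
   node at most twice: decompose a maximum flow of the gadget into 2l
   arc-disjoint walks and project each of them to H. *)
Lemma paths_of_cut_condition l :
  (forall C : {set V}, s \notin C -> t \notin C -> #|C| < l ->
     lambda_ge ends C s t (2 * (l - #|C|))) ->
  exists P : 'I_(2 * l) -> seq V * seq E,
    edp_family ends s t set0 (2 * l) P /\
    (forall v : V, v != s -> v != t -> #|[set i | v \in (P i).1]| <= 2).
Proof.
move=> Hcut.
have gst : gsource E s != gsink E t by apply/eqP => -[/eqP]; rewrite (negbTE st).
have [F HF] := max_flow gst (gadget_connected st Hcut).
have [Ws [Hsize HWs Hdisj]] := flow_decomposition gst HF.
pose W (i : 'I_(2 * l)) := nth [::] Ws i.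
have arc_once a i j : a \in W i -> a \in W j -> i = j.
  move=> ai aj; apply: val_inj; apply: (nth_count_le1 (Hdisj a)) ai aj;
    by rewrite Hsize.
have /fin_all_exists[P HP] i : exists p : seq V * seq E,
    [/\ is_st_path ends s t p.1 p.2, {subset p.2 <= used_edges (W i)}
      & {subset p.1 <= used_nodes s t (W i)}].
  have /HWs[HW _] : W i \in Ws by apply: mem_nth; rewrite Hsize.
  by have [vs [es Hvs]] := extract_path HW; exists (vs, es).
exists P; split; first split.
- by move=> i; have [Hpath _ _] := HP i; split => //; apply/allP => v _; rewrite inE.
- move=> i j ij e ei; apply: contra_neqN ij => ej.
  have [_ Hi _] := HP i; have [_ Hj _] := HP j.
  by move: (Hi _ ei) (Hj _ ej); rewrite !inE; apply: arc_once.
- move=> v vs vt.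
  pose S c := [set i | inl (v, c) \in W i].
  have S1 c : #|S c| <= 1.
    by apply/card_le1_eqP => i j; rewrite !inE => vi vj; apply: arc_once vj vi.
  apply: (@leq_trans #|S false :|: S true|).
    apply/subset_leq_card/subsetP => i; rewrite !inE => vi.
    by have [_ _ /(_ v vi)] := HP i; rewrite inE (negbTE vs) (negbTE vt).
  by rewrite cardsU; have := S1 false; have := S1 true; lia.
Qed.

End Paths.

Section Subfamilies.
Variables (V E : finType) (ends : E -> V * V) (s t : V).

Lemma edp_subfamily n k (P : 'I_n -> seq V * seq E) (C : {set V}) (I : {set 'I_n}) :
  edp_family ends s t set0 n P -> {in I, forall i, all (fun v => v \notin C) (P i).1} ->
  k <= #|I| -> lambda_ge ends C s t k.
Proof.
move=> [HP Hdisj] HI kI.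
pose f (j : 'I_k) := enum_val (widen_ord kI j).
have f_inj : injective f by move=> j j' /enum_val_inj [] /val_inj.
exists (fun j => P (f j)); split => [j|j j' jj'].
- by have [Hpath _] := HP (f j); split => //; apply: HI; exact: enum_valP.
- by apply: (Hdisj (f j) (f j')); apply: contra_neq jj'; apply: f_inj.
Qed.

Lemma hitting_paths_card n (P : 'I_n -> seq V * seq E) (C : {set V}) :
  (forall v : V, v != s -> v != t -> #|[set i | v \in (P i).1]| <= 2) ->
  s \notin C -> t \notin C ->
  #|[set i | ~~ all (fun v => v \notin C) (P i).1]| <= 2 * #|C|.
Proof.
move=> Hnode sC tC; rewrite card_indicator.
apply: (@leq_trans (\sum_i \sum_(v in C) (v \in (P i).1))).
  apply: leq_sum => i _; rewrite inE -has_predC.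
  case: hasP => [[v vP /negPn vC]|//].
  by rewrite (bigD1 v) //= vP.
rewrite exchange_big /= mulnC -sum_nat_const.
apply: leq_sum => v vC.
have -> : \sum_i (v \in (P i).1) = #|[set i | v \in (P i).1]|.
  by rewrite card_indicator; apply: eq_bigr => i _; rewrite inE.
by apply: Hnode; [apply: contraNneq sC => <- | apply: contraNneq tC => <-].
Qed.

Lemma cut_condition_of_paths l (P : 'I_(2 * l) -> seq V * seq E) :
  edp_family ends s t set0 (2 * l) P ->
  (forall v : V, v != s -> v != t -> #|[set i | v \in (P i).1]| <= 2) ->
  forall C : {set V}, s \notin C -> t \notin C -> #|C| < l ->
    lambda_ge ends C s t (2 * (l - #|C|)).
Proof.
move=> HP Hnode C sC tC _.
pose I := [set i | all (fun v => v \notin C) (P i).1].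
apply: (edp_subfamily HP (I := I)) => [i|]; first by rewrite inE.
have Hhit : #|~: I| <= 2 * #|C|.
  rewrite (_ : ~: I = [set i | ~~ all (fun v => v \notin C) (P i).1]).
    exact: hitting_paths_card.
  by apply/setP => i; rewrite !inE.
by have := cardsC I; rewrite card_ord; set a := #|I|; lia.
Qed.

End Subfamilies.

Theorem corollary3 (V E : finType) (ends : E -> V * V) (s t : V) (l : nat) :
  s != t -> 0 < l ->
  ((forall C : {set V}, s \notin C -> t \notin C -> #|C| < l ->
      lambda_ge ends C s t (2 * (l - #|C|)))
   <->
   (exists P : 'I_(2 * l) -> seq V * seq E,
      edp_family ends s t set0 (2 * l) P /\
      (forall v : V, v != s -> v != t -> #|[set i | v \in (P i).1]| <= 2))).
Proof.
move=> st _; split; first exact: paths_of_cut_condition.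
by case=> P [HP Hnode]; exact: cut_condition_of_paths HP Hnode.
Qed.
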